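(* Let $s_1\in\mathbb{Q}$ with $0<s_1<1$, $u_1=\frac{1-s_1^2}{2s_1}$, let $m\in\mathbb{Q}$ with $0<m<\sqrt2-1$, and let $\alpha\in(0,\pi/4)$ be the angle with $\cos\alpha=\frac{1-m^2}{1+m^2}$, $\sin\alpha=\frac{2m}{1+m^2}$. Define $$s_2=2u_1\cot(2\alpha),\qquad s_3=\frac{\cos\alpha-\sin\alpha}{s_2},\qquad s_4=\frac{s_2}{\cos\alpha+\sin\alpha}.$$ Then $s_3\neq s_4$. (Equivalently, in the family of rational leaning boxes of Theorem 1 the two diagonals $c_1,c_2$ of the parallelogram face are never equal, so this family contains no perfect cuboid.)
   Context: In the family of Theorem 1 one sets $u_k=\frac{1-s_k^2}{2s_k}$, and the parallelogram face of the leaning box has diagonals proportional to $u_3$ and $u_4$; $s_3=s_4$ is equivalent to $u_3=u_4$, i.e. to that face being a rectangle. *)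

From Stdlib Require Export Reals QArith Qreals.
Open Scope R_scope.

Definition u_of (s : R) : R := (1 - s ^ 2) / (2 * s).

Definition cot (x : R) : R := cos x / sin x.

(* If s3 = s4 then cos 2α = (cos α - sin α)(cos α + sin α) = s2², that is
   sin² 2α = 4 u1² cos 2α (α < π/4 keeps cos 2α, hence s2, nonzero; for
   s2 = 0 Rocq's division would make s3 = s4 = 0).  Writing cos α, sin α and
   u1 through the rational parameters m and s1 and clearing denominators turns
   this into a rational point of X⁴ = Y⁴ + Z² with Y Z ≠ 0.  Fermat's infinite
   descent rules such points out: from a primitive solution, the Pythagorean
   triple (y², z, x²) yields a solution with a smaller x, whether y is odd
   (then m⁴ = n⁴ + (xy)²) or even (then the generators of the triple are
   themselves, up to squares, a smaller solution). *)

From Stdlib Require Import Reals QArith Qreals ZArith Lia Lra Psatz.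
From mathcomp Require Import all_boot zify.
Open Scope R_scope.

Section QuarticDescent.
Local Open Scope nat_scope.

(* zify would turn the divisibility hypotheses into nonlinear constraints that
   only slow [nia] down. *)
Ltac nat_arith := repeat match goal with
  | H : is_true (coprime _ _) |- _ => clear H
  | H : is_true (odd _) |- _ => clear H
  | H : is_true (~~ odd _) |- _ => clear H
  | H : is_true (_ %| _) |- _ => clear H
  end; first [lia | nia].

Definition quartic_solution (x y z : nat) : Prop :=
  [/\ 0 < y, 0 < z & x ^ 4 = y ^ 4 + z ^ 2].

Lemma coprime_common_dvd (p q : nat) :
  (forall d, d %| p -> d %| q -> d %| 1) -> coprime p q.
Proof. by move=> H; rewrite /coprime -dvdn1; apply: H; [apply: dvdn_gcdl|apply: dvdn_gcdr]. Qed.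

Lemma common_dvd_coprime (p q d : nat) : coprime p q -> d %| p -> d %| q -> d %| 1.
Proof. by move=> /eqP <- hp hq; rewrite dvdn_gcd hp hq. Qed.

Lemma even_double (n : nat) : ~~ odd n -> exists k, n = 2 * k.
Proof. by move=> en; exists n./2; rewrite mul2n even_halfK. Qed.

Lemma sqr_of_coprime_mul (a b c : nat) :
  coprime a b -> a * b = c ^ 2 -> exists d, a = d ^ 2.
Proof.
move=> cab e; exists (gcdn a c); set g := gcdn a c.
apply/eqP; rewrite eqn_dvd; apply/andP; split.
- rewrite -mulnn /g muln_gcdl dvdn_gcd; apply/andP; split; first exact: dvdn_mulr.
  by rewrite muln_gcdr dvdn_gcd mulnn -e dvdn_mull ?dvdn_mulr.
- have gb : coprime (g ^ 2) b by rewrite coprimeXl // (coprime_dvdl (dvdn_gcdl a c)).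
  by rewrite -(Gauss_dvdl _ gb) e dvdn_exp2r // dvdn_gcdr.
Qed.

Lemma primitive_pythagorean (a b c : nat) :
  coprime a b -> a ^ 2 + b ^ 2 = c ^ 2 -> ~~ odd b -> 0 < b ->
  exists m n, [/\ a = m ^ 2 - n ^ 2, b = 2 * m * n, c = m ^ 2 + n ^ 2,
                  coprime m n & n <= m].
Proof.
move=> cab e eb b0.
have oa : odd a.
  apply: contraT => ea; have := common_dvd_coprime _ _ 2 cab.
  by rewrite !dvdn2 ea eb => /(_ isT isT).
have oc : odd c by move: (congr1 odd e); rewrite oddD !oddX oa (negbTE eb).
have ac : a < c by nat_arith.
have cac : coprime a c.
  by rewrite -(coprime_pexpr a c (isT : 0 < 2)) -e /coprime -mulnn gcdnMDl
             -/(coprime a (b * b)) coprimeMr cab.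
have [P eP] : exists P, c + a = 2 * P by apply: even_double; rewrite oddD oc oa.
have [Q eQ] : exists Q, c - a = 2 * Q by apply: even_double; rewrite oddB ?oc ?oa // ltnW.
have [R eR] := even_double _ eb.
have ePQ : P * Q = R ^ 2 by nat_arith.
have cPQ : coprime P Q.
  apply: coprime_common_dvd => d dP dQ; apply: (common_dvd_coprime _ _ _ cac).
  - have -> : a = P - Q by nat_arith. exact: dvdn_sub.
  - have -> : c = P + Q by nat_arith. exact: dvdn_add.
have [m hm] := sqr_of_coprime_mul _ _ _ cPQ ePQ.
have [n hn] : exists n, Q = n ^ 2.
  by apply: (sqr_of_coprime_mul Q P R); rewrite 1?coprime_sym // mulnC.
have eR2 : R = m * n by apply/eqP; rewrite -eqn_sqr -ePQ hm hn expnMn.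
have nm : n <= m by rewrite -leq_sqr -hm -hn; nat_arith.
exists m, n; split => //.
- by rewrite -hm -hn; nat_arith.
- by rewrite eR eR2 mulnA.
- by rewrite -hm -hn; nat_arith.
- by move: cPQ; rewrite hm hn coprime_pexpl // coprime_pexpr.
Qed.

Lemma sqr_mod4 (n : nat) : n ^ 2 %% 4 = odd n.
Proof.
have := odd_double_half n; case: (odd n) => /= h.
- have -> : n ^ 2 = (n./2 ^ 2 + n./2) * 4 + 1 by rewrite -h; nat_arith.
  by rewrite modnMDl.
- have -> : n ^ 2 = n./2 ^ 2 * 4 by rewrite -h; nat_arith.
  by rewrite modnMl.
Qed.

(* a, b and a² - b² are pairwise coprime with a square product, hence squares
   c², d², e², and then c⁴ = d⁴ + e². *)
Lemma quartic_solution_of_sqr_area (a b y : nat) :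
  coprime a b -> 0 < b < a -> y ^ 2 = 4 * a * b * (a ^ 2 - b ^ 2) ->
  exists c d e, c < a ^ 2 + b ^ 2 /\ quartic_solution c d e.
Proof.
move=> cab /andP[b0 ba] ey; set M := a ^ 2 - b ^ 2.
have [w ew] : exists w, y = 2 * w.
  apply: even_double; apply/negP => oy.
  by have := congr1 odd ey; rewrite oddX oy !oddM.
have ew2 : w ^ 2 = a * (b * M) by nat_arith.
have caM : coprime a M.
  apply: coprime_common_dvd => d da dM.
  apply: (common_dvd_coprime _ _ _ (coprimeXr 2 cab)) => //.
  have -> : b ^ 2 = a ^ 2 - M by rewrite /M; nat_arith.
  by apply: dvdn_sub => //; apply: dvdn_exp.
have cbM : coprime b M.
  apply: coprime_common_dvd => d db dM.
  apply: (common_dvd_coprime b (a ^ 2)) => //; first by rewrite coprimeXr // coprime_sym.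
  have -> : a ^ 2 = M + b ^ 2 by rewrite /M; nat_arith.
  by apply: dvdn_add => //; apply: dvdn_exp.
have [c hc] : exists c, a = c ^ 2.
  by apply: (sqr_of_coprime_mul _ (b * M) w); rewrite ?coprimeMr ?cab ?caM.
have [d hd] : exists d, b = d ^ 2.
  apply: (sqr_of_coprime_mul _ (a * M) w); last by rewrite ew2; nat_arith.
  by rewrite coprimeMr coprime_sym cab cbM.
have [e he] : exists e, M = e ^ 2.
  apply: (sqr_of_coprime_mul _ (a * b) w); last by rewrite ew2; nat_arith.
  by rewrite coprimeMr !(coprime_sym M) caM cbM.
exists c, d, e; split.
  have c_le_a : c <= a by rewrite hc; clear; nia.
  clear -c_le_a b0 ba; nia.
split.
- by move: b0; rewrite hd expn_gt0 orbF.
- by move: ba; rewrite -ltn_sqr -subn_gt0 -/M he expn_gt0 orbF.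
- by rewrite (_ : 4 = 2 * 2) // !expnM -hc -hd -he subnKC // leq_sqr ltnW.
Qed.

Lemma quartic_descent_gcd (x y z : nat) :
  quartic_solution x y z -> gcdn x y != 1 ->
  exists x' y' z', x' < x /\ quartic_solution x' y' z'.
Proof.
move=> [y0 z0 e] g1; set g := gcdn x y.
have x0 : 0 < x by move: y0 e; clear; nia.
have {g1} g_gt1 : 1 < g by rewrite ltn_neqAle eq_sym g1 gcdn_gt0 x0.
have [x' ex] : exists x', x = x' * g by exists (x %/ g); rewrite divnK // dvdn_gcdl.
have [y' ey] : exists y', y = y' * g by exists (y %/ g); rewrite divnK // dvdn_gcdr.
have [z' ez] : exists z', z = z' * g ^ 2.
  exists (z %/ g ^ 2); rewrite divnK // -(dvdn_pexp2r _ _ (isT : 0 < 2)).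
  have -> : z ^ 2 = x ^ 4 - y ^ 4 by rewrite e addKn.
  by rewrite ex ey -expnM !expnMn dvdn_sub // dvdn_mull.
exists x', y', z'; split; first by move: x0; rewrite ex; clear -g_gt1; nia.
split; first by move: y0; rewrite ey; clear; nia.
  by move: z0; rewrite ez; clear; nia.
have g4 : 0 < g ^ 4 by rewrite expn_gt0 ltnW.
apply/eqP; rewrite -(eqn_pmul2r g4); apply/eqP.
by move: e; rewrite ex ey ez; clear; nia.
Qed.

Lemma quartic_coprime (x y z : nat) :
  quartic_solution x y z -> coprime x y -> coprime (y ^ 2) z.
Proof.
move=> [_ _ e] cxy; apply: coprime_common_dvd => d dy dz.
apply: (common_dvd_coprime (y ^ 4) (x ^ 4)).
- by rewrite coprimeXl // coprimeXr // coprime_sym.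
- by rewrite (_ : 4 = 2 * 2) // expnM; apply: dvdn_exp.
- by rewrite e (_ : 4 = 2 * 2) // expnM; apply: dvdn_add => //; apply: dvdn_exp.
Qed.

Lemma quartic_descent_odd (x y z : nat) :
  quartic_solution x y z -> coprime x y -> odd y ->
  exists x' y' z', x' < x /\ quartic_solution x' y' z'.
Proof.
move=> sol cxy oy; have [y0 z0 e] := sol.
have e2 : (y ^ 2) ^ 2 + z ^ 2 = (x ^ 2) ^ 2 by rewrite -!expnM.
have ez : ~~ odd z.
  apply/negP => oz; have := congr1 (modn^~ 4) e2.
  by rewrite -modnDm !sqr_mod4 !oddX oy oz /=; case: (odd x).
have [m [n [hy hz hx cmn nm]]] :=
  primitive_pythagorean _ _ _ (quartic_coprime _ _ _ sol cxy) e2 ez z0.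
exists m, n, (x * y); split; last split.
- by move: hx z0; rewrite hz; clear; nia.
- by move: z0; rewrite hz; clear; nia.
- by move: e y0; clear; nia.
- have n2m2 : n ^ 2 <= m ^ 2 by rewrite leq_sqr.
  by move: hx hy n2m2; clear; nia.
Qed.

Lemma quartic_descent_even (x y z : nat) :
  quartic_solution x y z -> coprime x y -> ~~ odd y ->
  exists x' y' z', x' < x /\ quartic_solution x' y' z'.
Proof.
move=> sol cxy ey; have [y0 z0 e] := sol.
have descend p q : coprime p q -> ~~ odd q -> 0 < q -> p ^ 2 + q ^ 2 = x ^ 2 ->
    y ^ 2 = 2 * p * q -> exists x' y' z', x' < x /\ quartic_solution x' y' z'.
  move=> cpq q_even q0 hx hy.
  have [a [b [ha hb hx' cab ba]]] := primitive_pythagorean _ _ _ cpq hx q_even q0.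
  have b0 : 0 < b by move: q0; rewrite hb; clear; nia.
  have p0 : 0 < p by move: y0 hy; clear; nia.
  have b_lt_a : b < a by rewrite -ltn_sqr -subn_gt0 -ha.
  have [c [d [e' [c_lt sol']]]] : exists c d e, c < a ^ 2 + b ^ 2 /\ quartic_solution c d e.
    by apply: (quartic_solution_of_sqr_area a b y) => //; [rewrite b0 | rewrite hy ha hb; nat_arith].
  by exists c, d, e'; rewrite hx'.
have cz : coprime z (y ^ 2) by rewrite coprime_sym (quartic_coprime _ _ _ sol cxy).
have e2 : z ^ 2 + (y ^ 2) ^ 2 = (x ^ 2) ^ 2 by rewrite -!expnM addnC.
have ey2 : ~~ odd (y ^ 2) by rewrite oddX.
have y2_gt0 : 0 < y ^ 2 by rewrite expn_gt0 y0.
have [m [n [_ hy hx cmn _]]] := primitive_pythagorean _ _ _ cz e2 ey2 y2_gt0.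
have emn : ~~ odd (m * n).
  have [k ek] := even_double _ ey.
  have -> : m * n = 2 * k ^ 2 by move: hy; rewrite ek; clear; nia.
  by rewrite oddM.
have mn0 : 0 < m * n by move: y2_gt0; rewrite hy; clear; nia.
case: (boolP (odd n)) => on.
- apply: (descend n m); rewrite 1?coprime_sym //.
  + by move: emn; rewrite oddM on andbT.
  + by move: mn0; rewrite muln_gt0 => /andP[].
  + by rewrite addnC -hx.
  + by rewrite hy mulnAC.
- apply: (descend m n) => //.
  by move: mn0; rewrite muln_gt0 => /andP[].
Qed.

Lemma quartic_descent (x y z : nat) :
  quartic_solution x y z -> exists x' y' z', x' < x /\ quartic_solution x' y' z'.
Proof.
move=> sol; have [cxy | ncxy] := boolP (coprime x y); last exact: quartic_descent_gcd _ _ _ sol ncxy.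
have [oy | ey] := boolP (odd y).
- exact: quartic_descent_odd _ _ _ sol cxy oy.
- exact: quartic_descent_even _ _ _ sol cxy ey.
Qed.

Lemma no_quartic_solution (x y z : nat) : ~ quartic_solution x y z.
Proof.
elim: x {-2}x (leqnn x) y z => [|N IH] x le_xN y z sol.
  by have [x' [y' [z' [lt_x' _]]]] := quartic_descent _ _ _ sol; move: le_xN lt_x'; clear; lia.
have [x' [y' [z' [lt_x' sol']]]] := quartic_descent _ _ _ sol.
by apply: (IH x' _ y' z' sol'); move: le_xN lt_x'; clear; lia.
Qed.

End QuarticDescent.

Lemma no_quartic_solution_Z (x y z : Z) :
  y <> 0%Z -> z <> 0%Z -> (x ^ 4 <> y ^ 4 + z ^ 2)%Z.
Proof.
move=> y0 z0 e.
by apply: (no_quartic_solution (Z.abs_nat x) (Z.abs_nat y) (Z.abs_nat z)); split; lia.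
Qed.

(* The equation is homogeneous once z gets weight 2: clearing denominators
   scales x and y by p q r and z by (p q r)². *)
Lemma Q2R_quartic_neq (x y z : Q) :
  Q2R y <> 0 -> Q2R z <> 0 -> Q2R x ^ 4 <> Q2R y ^ 4 + Q2R z ^ 2.
Proof.
case: x => [X p]; case: y => [Y q]; case: z => [Z r]; rewrite /Q2R; cbn [Qnum Qden] => y0 z0 e.
have hp : IZR (Z.pos p) <> 0 by apply: not_0_IZR.
have hq : IZR (Z.pos q) <> 0 by apply: not_0_IZR.
have hr : IZR (Z.pos r) <> 0 by apply: not_0_IZR.
apply: (no_quartic_solution_Z (X * Z.pos q * Z.pos r) (Y * Z.pos p * Z.pos r)
          (Z * Z.pos p ^ 2 * Z.pos q ^ 2 * Z.pos r)).
- have {y0} : Y <> 0%Z by move=> Y0; apply: y0; rewrite Y0 Rmult_0_l.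
  by lia.
- have {z0} : Z <> 0%Z by move=> Z0; apply: z0; rewrite Z0 Rmult_0_l.
  by lia.
apply: eq_IZR; rewrite plus_IZR -!(pow_IZR _ 4) -(pow_IZR (Z * _ * _ * _) 2) !mult_IZR.
move/Rminus_diag_eq: e => e; apply: Rminus_diag_uniq.
by rewrite -(Rmult_0_r ((IZR (Z.pos p) * IZR (Z.pos q) * IZR (Z.pos r)) ^ 4)) -e; field.
Qed.

Lemma equal_diagonals_sqr (alpha u : R) :
  cos alpha + sin alpha <> 0 -> sin (2 * alpha) <> 0 -> cos (2 * alpha) <> 0 -> u <> 0 ->
  (cos alpha - sin alpha) / (2 * u * cot (2 * alpha)) =
    2 * u * cot (2 * alpha) / (cos alpha + sin alpha) ->
  sin (2 * alpha) ^ 2 = 4 * u ^ 2 * cos (2 * alpha).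
Proof.
rewrite /cot => hcs hS hC hu.
set k := 2 * u * (cos (2 * alpha) / sin (2 * alpha)) => equal_diagonals.
have k_neq0 : k <> 0.
  by rewrite /k /Rdiv; repeat apply: Rmult_integral_contrapositive_currified;
    try apply: Rinv_neq_0_compat; lra.
have cos2_sqr : cos (2 * alpha) = k ^ 2.
  rewrite {1}cos_2a (_ : _ - _ = (cos alpha - sin alpha) / k * (k * (cos alpha + sin alpha))).
    by rewrite equal_diagonals; field.
  by field.
apply: (Rmult_eq_reg_r (cos (2 * alpha))) => //.
by rewrite {1}cos2_sqr /k; field.
Qed.

(* With p = 1 - t² and q = 2 t the hypothesis reads
   p² q² (2 r)² = (1 - r²)² (p⁴ - q⁴); multiply by (1 - r²)². *)
Lemma quartic_point_of_rational_angle (c s t r : R) :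
  r <> 0 -> c = (1 - t ^ 2) / (1 + t ^ 2) -> s = 2 * t / (1 + t ^ 2) ->
  (2 * s * c) ^ 2 = 4 * u_of r ^ 2 * (c * c - s * s) ->
  ((1 - r ^ 2) * (1 - t ^ 2)) ^ 4 =
    ((1 - r ^ 2) * (2 * t)) ^ 4 + ((1 - t ^ 2) * (2 * t) * (2 * r) * (1 - r ^ 2)) ^ 2.
Proof.
rewrite /u_of => r_neq0 -> -> /Rminus_diag_eq condition.
have denom_neq0 : 1 + t ^ 2 <> 0 by nra.
apply: Rminus_diag_uniq.
by rewrite -(Rmult_0_r (- (1 - r ^ 2) ^ 2 * (1 + t ^ 2) ^ 4 * r ^ 2)) -condition; field.
Qed.

Theorem theorem2 (s1 m : Q) (alpha : R)
  (hs1 : 0 < Q2R s1 < 1)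
  (hm : 0 < Q2R m < sqrt 2 - 1)
  (halpha : 0 < alpha < PI / 4)
  (hcos : cos alpha = (1 - Q2R m ^ 2) / (1 + Q2R m ^ 2))
  (hsin : sin alpha = 2 * Q2R m / (1 + Q2R m ^ 2)) :
  let u1 := u_of (Q2R s1) in
  let s2 := 2 * u1 * cot (2 * alpha) in
  let s3 := (cos alpha - sin alpha) / s2 in
  let s4 := s2 / (cos alpha + sin alpha) in
  s3 <> s4.
Proof.
move=> u1 s2 s3 s4 equal_diagonals.
have pi_gt0 := PI_RGT_0.
have cos_gt0 : 0 < cos alpha by apply: cos_gt_0; lra.
have sin_gt0 : 0 < sin alpha by apply: sin_gt_0; lra.
have cos2_gt0 : 0 < cos (2 * alpha) by apply: cos_gt_0; lra.
have sin2_gt0 : 0 < sin (2 * alpha) by apply: sin_gt_0; lra.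
have m_lt1 : Q2R m < 1.
  by have := sqrt_sqrt 2; have := sqrt_pos 2; nra.
have u1_gt0 : 0 < u1 by apply: Rdiv_lt_0_compat; nra.
have hsq : sin (2 * alpha) ^ 2 = 4 * u1 ^ 2 * cos (2 * alpha).
  by apply: equal_diagonals_sqr equal_diagonals; lra.
rewrite sin_2a cos_2a in hsq.
have s1_neq0 : Q2R s1 <> 0 by lra.
have hquartic := quartic_point_of_rational_angle _ _ _ _ s1_neq0 hcos hsin hsq.
apply: (Q2R_quartic_neq ((1 - s1 * s1) * (1 - m * m)) ((1 - s1 * s1) * (m + m))
          ((1 - m * m) * (m + m) * (s1 + s1) * (1 - s1 * s1)));
  rewrite !(Q2R_mult, Q2R_minus, Q2R_plus, RMicromega.Q2R_1).
- by repeat apply: Rmult_integral_contrapositive_currified; nra.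
- by repeat apply: Rmult_integral_contrapositive_currified; nra.
- have double x : x + x = 2 * x by ring.
  have square x : x * x = x ^ 2 by ring.
  by rewrite !double !square.
Qed.
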